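(* Let $mG$, $mG'$ be finite canonical misinformation games and $t\ge0$. If $mG'\in\mathcal{AD}^{(t)}(\{mG\})$ and $mG'\in\mathcal{AD}(\{mG'\})$, then $mG'\in\mathcal{AD}^\infty(\{mG\})$.
   Context: A normal-form game is $G=\langle N,S,P\rangle$ with finite players $N$, finite pure strategy sets $S_i$, positions $S=\times_i S_i$, payoffs $P_i:S\to\mathbb{R}$. A misinformation game $mG=\langle G^0,G^1,\dots,G^{|N|}\rangle$ consists of the actual game $G^0$ and subjective games $G^i$; it is canonical if all $G^i=\langle N,S,P^i\rangle$ differ from $G^0$ only in payoffs and in every $G^i$ all players have equally many pure strategies. $NME(mG)$ is the set of profiles $\sigma=(\sigma_1,\dots,\sigma_{|N|})$ such that each $\sigma_i$ is player $i$'s component of some Nash equilibrium of $G^i$. $\chi(\sigma)=\mathrm{supp}(\sigma_1)\times\dots\times\mathrm{supp}(\sigma_{|N|})$. For $\vec v\in S$, $mG_{\vec v}$ is obtained by replacing, in every $P^i$ ($i\ge1$), the payoff vector at position $\vec v$ by $P^0(\vec v)$. For a set $M$ of misinformation games, $\mathcal{AD}(M)=\{mG_{\vec u}: mG\in M,\sigma\in NME(mG),\vec u\in\chi(\sigma)\}$, $\mathcal{AD}^{(0)}(M)=M$, $\mathcal{AD}^{(t+1)}(M)=\mathcal{AD}^{(t)}(\mathcal{AD}(M))$; the length $\mathfrak{L}$ is the least $t\ge0$ with $\mathcal{AD}^{(t+1)}(M)=\mathcal{AD}^{(t)}(M)$ and $\mathcal{AD}^\infty(M)=\mathcal{AD}^{(\mathfrak{L})}(M)$.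 *)

From HB Require Import structures.
From mathcomp Require Import all_boot all_order all_algebra.
From mathcomp Require Import reals.
Set Implicit Arguments. Unset Strict Implicit. Unset Printing Implicit Defensive.
Import Order.TTheory GRing.Theory Num.Theory.
Local Open Scope ring_scope.

Section MG.
Variables (R : realType) (n m : nat).
(* Players are 'I_n; in a canonical misinformation game every player has the
   same number m of pure strategies, in every (actual and subjective) game. *)

Definition position := {ffun 'I_n -> 'I_m}.

Definition game := {ffun position -> {ffun 'I_n -> R}}.

Definition mgame := (game * {ffun 'I_n -> game})%type.
Definition actual (mG : mgame) : game := mG.1.
Definition subj (mG : mgame) (i : 'I_n) : game := mG.2 i.

Definition mixed (s : {ffun 'I_m -> R}) : Prop :=
  (forall a, 0 <= s a) /\ \sum_a s a = 1.
Definition profile := 'I_n -> {ffun 'I_m -> R}.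
Definition mixed_profile (sigma : profile) : Prop := forall i, mixed (sigma i).

Definition exp_payoff (P : game) (sigma : profile) (i : 'I_n) : R :=
  \sum_(s : position) (\prod_(j : 'I_n) sigma j (s j)) * P s i.

Definition deviate (sigma : profile) (i : 'I_n) (tau : {ffun 'I_m -> R}) : profile :=
  fun j => if j == i then tau else sigma j.

Definition nash (P : game) (sigma : profile) : Prop :=
  mixed_profile sigma /\
  forall i tau, mixed tau -> exp_payoff P (deviate sigma i tau) i <= exp_payoff P sigma i.

Definition NME (mG : mgame) (sigma : profile) : Prop :=
  forall i, exists sigma', nash (subj mG i) sigma' /\ sigma' i = sigma i.

Definition chi (sigma : profile) (v : position) : Prop := forall i, 0 < sigma i (v i).

Definition update (mG : mgame) (v : position) : mgame :=
  (actual mG, [ffun i => [ffun s => if s == v then actual mG v else subj mG i s]]).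

Definition mset := mgame -> Prop.
Definition mset_eq (A B : mset) : Prop := forall g, A g <-> B g.

Definition AD (M : mset) : mset := fun g =>
  exists mG sigma u, [/\ M mG, NME mG sigma, chi sigma u & g = update mG u].

Fixpoint ADt (t : nat) (M : mset) : mset :=
  match t with
  | 0 => M
  | t'.+1 => ADt t' (AD M)
  end.

Definition AD_infty (M : mset) : mset := fun g =>
  exists L : nat,
    [/\ mset_eq (ADt L.+1 M) (ADt L M),
        (forall t, (t < L)%N -> ~ mset_eq (ADt t.+1 M) (ADt t M))
      & ADt L M g].

Definition singleton (mG : mgame) : mset := fun g => g = mG.
End MG.

From mathcomp Require Import all_boot all_order all_algebra.
From mathcomp Require Import reals.
From Stdlib Require Import Classical Wf_nat.

Set Implicit Arguments. Unset Strict Implicit. Unset Printing Implicit Defensive.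

(* Every adaptation step mG |-> mG_u either leaves mG unchanged (when the
   subjective payoffs already agree with the actual ones at u) or strictly
   enlarges the set of positions where all subjective games agree with the
   actual one.  Hence a chain of more than |S| steps from mG contains an idle
   step, which can be repeated or dropped: AD^(t) and AD^(t+1) of {mG} agree
   once t > |S|, so the length L is finite.  Since mG' is a fixed point of one
   step, it lies in AD^(t+d)({mG}) for every d, in particular in
   AD^(t+L)({mG}) = AD^(L)({mG}). *)

Lemma classical_ex_minn (P : nat -> Prop) : (exists k, P k) ->
  exists L, P L /\ forall t, (t < L)%N -> ~ P t.
Proof.
move=> exP.
have [L [[PL minL] _]] :=
  dec_inh_nat_subset_has_unique_least_element P (fun t => classic (P t)) exP.
exists L; split=> // t ltL Pt.
by move/leP: (minL t Pt); rewrite leqNgt ltL.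
Qed.

Section Adaptation.
Variables (R : realType) (n m : nat).
Implicit Types (M : mset R n m) (g h : mgame R n m).

Definition agreement g : {set position n m} :=
  [set v | [forall i, subj g i v == actual g v]].

Lemma ADtSr t M : ADt t.+1 M = AD (ADt t M).
Proof. by elim: t M => [|t IH] M //=; apply: IH. Qed.

Lemma AD_step M g (sigma : profile R n m) u :
  M g -> NME g sigma -> chi sigma u -> AD M (update g u).
Proof. by move=> Mg Nsigma chiu; exists g, sigma, u. Qed.

Lemma AD_mset_eq M M' : mset_eq M M' -> mset_eq (AD M) (AD M').
Proof.
by move=> eqM g; split=> -[h [sigma [u [Mh Nsigma chiu ->]]]];
  apply: (AD_step _ Nsigma chiu); apply/eqM.
Qed.

Lemma AD_fixed M g : AD (singleton g) g -> M g -> AD M g.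
Proof.
by case=> [h [sigma [u [-> Nsigma chiu def_g]]]] Mg; rewrite def_g; apply: AD_step.
Qed.

Lemma update_id_or_agreement_grows g u :
  update g u = g \/ (#|agreement g| < #|agreement (update g u)|)%N.
Proof.
case: g => a f; case agree_u: (u \in agreement (a, f)).
  left; congr pair; apply/ffunP => i; apply/ffunP => s; rewrite !ffunE.
  case: eqP => // ->.
  by move: agree_u; rewrite inE => /forallP /(_ i) /eqP.
right; apply/proper_card/properP; split.
  apply/subsetP => v; rewrite !inE => /forallP agree_v; apply/forallP => i.
  rewrite /subj /actual /update /= !ffunE.
  by case: (eqVneq v u) => [->|_]; last exact: agree_v.
exists u; last by rewrite agree_u.
by rewrite inE; apply/forallP => i; rewrite /subj /actual /update /= !ffunE eqxx.
Qed.

Lemma ADt_singleton_grow_or_idle g t h : ADt t (singleton g) h ->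
  (#|agreement g| + t <= #|agreement h|)%N \/
  [/\ (0 < t)%N, ADt t.+1 (singleton g) h & ADt t.-1 (singleton g) h].
Proof.
elim: t h => [|t IH] h; first by move=> /= ->; left; rewrite addn0.
rewrite ADtSr => -[k [sigma [u [ADk Nsigma chiu ->]]]].
have [idle|grows] := update_id_or_agreement_grows k u.
  have ADk1 : ADt t.+1 (singleton g) (update k u) by rewrite ADtSr; apply: AD_step.
  rewrite idle in ADk1 *; right; split=> //.
  by rewrite ADtSr -idle; apply: AD_step.
case: (IH k ADk) => [le_k|[t_gt0 ADk2 ADk0]].
  by left; rewrite addnS; apply: leq_ltn_trans le_k grows.
right; split=> //; first by rewrite ADtSr; apply: AD_step.
by rewrite /= -(prednK t_gt0) ADtSr; apply: AD_step.
Qed.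

Lemma ADt_singleton_long g t h : (#|{: position n m}| < t)%N ->
  ADt t (singleton g) h -> ADt t.+1 (singleton g) h /\ ADt t.-1 (singleton g) h.
Proof.
move=> long /ADt_singleton_grow_or_idle [le_h|[_ AD1 AD0]] //.
have := leq_trans le_h (max_card (mem (agreement h))).
by rewrite leqNgt (leq_trans long (leq_addl _ _)).
Qed.

Lemma ADt_singleton_saturates g : exists k,
  mset_eq (ADt k.+1 (singleton g)) (ADt k (singleton g)).
Proof.
set N := #|{: position n m}|; exists N.+1 => h; split=> ADh.
  by case: (ADt_singleton_long (ltnW (ltnSn N.+1)) ADh).
by case: (ADt_singleton_long (ltnSn N) ADh).
Qed.

Lemma ADt_fixpoint M k d :
  mset_eq (ADt k.+1 M) (ADt k M) -> mset_eq (ADt (k + d) M) (ADt k M).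
Proof.
move=> eqk; elim: d => [|d IH]; first by rewrite addn0.
move=> h; rewrite addnS ADtSr.
by move: (AD_mset_eq IH h) (eqk h); rewrite ADtSr; tauto.
Qed.

Lemma ADt_fixed M g t d : AD (singleton g) g -> ADt t M g -> ADt (t + d) M g.
Proof.
move=> fixed_g ADg; elim: d => [|d IH]; first by rewrite addn0.
by rewrite addnS ADtSr; apply: AD_fixed.
Qed.

End Adaptation.

Theorem proposition10 (R : realType) (n m : nat) (mG mG' : mgame R n m) (t : nat) :
  ADt t (singleton mG) mG' ->
  AD (singleton mG') mG' ->
  AD_infty (singleton mG) mG'.
Proof.
move=> ADt_mG' fixed_mG'.
have [L [eqL minL]] := classical_ex_minn (ADt_singleton_saturates mG).
exists L; split=> //.
apply/(ADt_fixpoint t eqL); rewrite addnC.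
exact: ADt_fixed.
Qed.
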